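(* Let $m\ge 6$ be an integer and let $G^*$ be a graph attaining the maximum spectral radius among all minimally 2-edge-connected graphs with $m$ edges. Then $\rho(G^* )>\sqrt{m-2}$.
   Context: Graphs are finite and simple. $\rho(G)$ denotes the largest eigenvalue of the adjacency matrix of $G$. A graph is minimally 2-edge-connected if it is 2-edge-connected but deleting any one edge leaves a graph that is not 2-edge-connected. *)

From HB Require Import structures.
From mathcomp Require Import all_boot all_order all_algebra.
From mathcomp Require Import polyrcf.
Set Implicit Arguments. Unset Strict Implicit. Unset Printing Implicit Defensive.
Import Order.TTheory GRing.Theory Num.Theory.
Local Open Scope ring_scope.

Definition simple_graph (T : finType) (e : rel T) : Prop :=
  irreflexive e /\ symmetric e.

Definition edges (T : finType) (e : rel T) : {set {set T}} :=
  [set [set x; y] | x in T, y in T & e x y].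

Definition nedges (T : finType) (e : rel T) : nat := #|edges e|%N.

Definition gconnected (T : finType) (e : rel T) : Prop :=
  forall x y : T, connect e x y.

Definition del_edge (T : finType) (e : rel T) (u v : T) : rel T :=
  fun x y => e x y && ([set x; y] != [set u; v]).

Definition two_edge_connected (T : finType) (e : rel T) : Prop :=
  gconnected e /\ forall u v, e u v -> gconnected (del_edge e u v).

Definition min_two_edge_connected (T : finType) (e : rel T) : Prop :=
  two_edge_connected e /\
  forall u v, e u v -> ~ two_edge_connected (del_edge e u v).

Definition adjmx (R : nzRingType) (T : finType) (e : rel T) : 'M[R]_#|T| :=
  \matrix_(i, j) (e (enum_val i) (enum_val j))%:R.

(* Largest eigenvalue (= largest real root of the characteristic polynomial;
   the adjacency matrix is real symmetric so all eigenvalues are real).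
   The default 0 is only relevant for the empty graph. *)
Definition spec_radius (R : rcfType) (T : finType) (e : rel T) : R :=
  \big[Num.max/0]_(x <- rootsR (char_poly (adjmx R e))) x.

From HB Require Import structures.
From mathcomp Require Import all_boot all_order all_algebra.
From mathcomp Require Import polyrcf lra zify.
Import Order.TTheory GRing.Theory Num.Theory.

(* Compare the extremal graph with the theta graph whose two hubs are joined by
   n paths of length 2 and r <= 1 paths of length 3, where m = 2n + 3r.  It is
   minimally 2-edge-connected, since every edge lies on a cycle and has an end
   of degree 2.  Putting l(l-1) on the hubs, 2(l-1) on the midpoints of the
   short paths and l on the inner vertices of the long paths gives an
   eigenvector for l whenever l^3 - l^2 - (2n+r)l + 2n = 0, and this cubic is
   negative at sqrt(m-2), so it has a root beyond sqrt(m-2). *)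

Set Implicit Arguments. Unset Strict Implicit.
Local Open Scope ring_scope.

Section EdgeDeletion.
Variable T : finType.
Implicit Types (e : rel T) (u v w x y : T).

Lemma set2_eq_inv (a b c d : T) : [set a; b] = [set c; d] ->
  (a = c /\ b = d) \/ (a = d /\ b = c).
Proof.
move=> E.
have : a \in [set c; d] by rewrite -E !inE eqxx.
have : b \in [set c; d] by rewrite -E !inE eqxx orbT.
have : c \in [set a; b] by rewrite E !inE eqxx.
have : d \in [set a; b] by rewrite E !inE eqxx orbT.
rewrite !inE.
by do 4 (case/orP=> /eqP ?); subst; auto.
Qed.

Lemma del_edgeC e u v : del_edge e u v = del_edge e v u.
Proof. by rewrite /del_edge (setUC [set u]). Qed.

Lemma del_edge_sym e u v : symmetric e -> symmetric (del_edge e u v).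
Proof. by move=> se x y; rewrite /del_edge se setUC. Qed.

Lemma del_edge_away e u v x y :
  (x \notin [set u; v]) || (y \notin [set u; v]) -> del_edge e u v x y = e x y.
Proof.
move=> away; rewrite /del_edge; case: (e x y) => //=.
apply: contraTneq away => E.
by rewrite -E !inE !eqxx orbT.
Qed.

Lemma path_del_edge_away e u v x p y :
  x \notin [set u; v] -> all [predC [set u; v]] p ->
  path e x (rcons p y) -> path (del_edge e u v) x (rcons p y).
Proof.
elim: p x => [|z p IHp] x xuv /=; first by rewrite del_edge_away ?xuv.
case/andP=> zuv puv /andP[exz pz].
by rewrite del_edge_away ?xuv // exz IHp.
Qed.

Lemma connect_del_edge_cycle e u v p :
  p != [::] -> all [predC [set u; v]] p -> path e u (rcons p v) ->
  connect (del_edge e u v) u v.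
Proof.
case: p => [|x p] // _ /= /andP[xuv puv] /andP[eux px].
apply/connectP; exists (rcons (x :: p) v); last by rewrite last_rcons.
by rewrite rcons_cons /= del_edge_away ?xuv ?orbT // eux path_del_edge_away.
Qed.

Lemma two_edge_connected_cycles e : symmetric e -> gconnected e ->
  (forall u v, e u v -> connect (del_edge e u v) u v) -> two_edge_connected e.
Proof.
move=> se conn cycle; split=> // u v euv x y.
have csym := sym_connect_sym (del_edge_sym u v se).
apply: (connect_sub _ (conn x y)) => a b eab.
case: (eqVneq [set a; b] [set u; v]) => [/set2_eq_inv [[-> ->]|[-> ->]]|ab].
- exact: cycle.
- by rewrite csym; exact: cycle.
- by apply: connect1; rewrite /del_edge eab ab.
Qed.

(* Deleting one edge at a vertex of degree two leaves a pendant edge there. *)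
Lemma del_edge_deg2_not_2ec e w x b :
  irreflexive e -> (forall y, e w y = (y == x) || (y == b)) -> x != b ->
  ~ two_edge_connected (del_edge e w x).
Proof.
move=> irr nbw xb [_ bridge].
have ewx : e w x by rewrite nbw eqxx.
have ewb : e w b by rewrite nbw eqxx orbT.
have e1wb : del_edge e w x w b.
  rewrite /del_edge ewb /=; apply: contra_neq xb => /set2_eq_inv.
  by case=> [[_ ->]|[<- _]] //; rewrite irr in ewb.
have /connectP [[|y p] /= wpath xw] := bridge _ _ e1wb w x.
  by rewrite -xw irr in ewx.
move: wpath; rewrite /del_edge nbw.
by case: eqP => [->|_]; case: eqP => [->|_]; rewrite ?eqxx ?andbF.
Qed.

End EdgeDeletion.

Section SumEq.
Variables A B : eqType.
Implicit Types (a : A) (b : B).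

Lemma inl_eq a a' : (inl a == inl a' :> A + B) = (a == a').
Proof. by []. Qed.

Lemma inr_eq b b' : (inr b == inr b' :> A + B) = (b == b').
Proof. by []. Qed.

Lemma inl_inr_eq a b : (inl a == inr b :> A + B) = false.
Proof. by []. Qed.

Lemma inr_inl_eq a b : (inr b == inl a :> A + B) = false.
Proof. by []. Qed.

End SumEq.

Definition sum_eqE := (inl_eq, inr_eq, inl_inr_eq, inr_inl_eq).

Lemma sum_pair_bool (V : nmodType) (I : finType) (F : I * bool -> V) :
  \sum_z F z = \sum_i (F (i, true) + F (i, false)).
Proof.
rewrite (eq_bigr (fun z => F (z.1, z.2))); last by case.
rewrite -(pair_big xpredT xpredT (fun i b => F (i, b))) /=.
by apply: eq_bigr => i _; rewrite big_bool.
Qed.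

Section SpectralRadius.
Variables (R : rcfType) (T : finType) (e : rel T).

Lemma eigenvalue_le_spec_radius l : eigenvalue (adjmx R e) l -> l <= spec_radius R e.
Proof.
rewrite eigenvalue_root_char => root_l; apply: le_bigmax_seq => //.
by apply: (root_roots_on (roots_on_rootsR (monic_neq0 (char_poly_monic _)))).
Qed.

Lemma eigvec_eigenvalue_adjmx (g : T -> R) l x0 : g x0 != 0 ->
  (forall y, \sum_x g x * (e x y)%:R = l * g y) -> eigenvalue (adjmx R e) l.
Proof.
move=> gx0 eig; apply/eigenvalueP; exists (\row_j g (enum_val j)).
  apply/rowP => j; rewrite !mxE -eig.
  rewrite [RHS](reindex (@enum_val T T)); last exact/onW_bij/enum_val_bij.
  by apply: eq_bigr => i _; rewrite !mxE.
apply: contraNneq gx0 => /rowP /(_ (enum_rank x0)).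
by rewrite !mxE enum_rankK => ->.
Qed.

End SpectralRadius.

Section Theta.
Variables n r : nat.

(* [mid i] is the midpoint of the i-th path of length 2; [inner p false] and
   [inner p true] are the inner vertices of the p-th path of length 3, with
   [inner p b] adjacent to [hub b]. *)
Definition theta_vertex : finType := ((bool + 'I_n) + ('I_r * bool))%type.
Notation hub h := (@inl _ ('I_r * bool)%type (@inl bool 'I_n h) : theta_vertex).
Notation mid i := (@inl _ ('I_r * bool)%type (@inr bool 'I_n i) : theta_vertex).
Notation inner p b := (@inr (bool + 'I_n)%type _ (p, b) : theta_vertex).

Definition theta : rel theta_vertex := fun x y =>
  match x, y with
  | inl (inl _), inl (inr _) | inl (inr _), inl (inl _) => true
  | inl (inl h), inr (_, b) | inr (_, b), inl (inl h) => h == b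
  | inr (p, b), inr (q, c) => (p == q) && (b != c)
  | _, _ => false
  end.

Lemma theta_simple : simple_graph theta.
Proof.
split; first by case=> [[h|i]|[p b]] //=; rewrite !eqxx.
by case=> [[h|i]|[p b]] [[h'|i']|[q c]] //=; rewrite eq_sym // (eq_sym c).
Qed.

Lemma theta_mid i y : theta (mid i) y = (y == hub false) || (y == hub true).
Proof. by case: y => [[[]|j]|[p b]]. Qed.

Lemma theta_inner p b y : theta (inner p b) y = (y == hub b) || (y == inner p (~~ b)).
Proof. by case: y => [[h|j]|[q c]] /=; rewrite ?orbF //; case: b; case: c. Qed.

Lemma theta_connected : (0 < n)%N -> gconnected theta.
Proof.
move=> n0; pose i0 : 'I_n := Ordinal n0.
have csym := sym_connect_sym theta_simple.2.
suff to_hub x : connect theta x (hub false).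
  by move=> x y; apply: connect_trans (to_hub x) _; rewrite csym.
have hub_true : connect theta (hub true) (hub false).
  by apply: (@connect_trans _ _ (mid i0)); apply: connect1.
case: x => [[[]|i]|[p []]] //; try exact: connect1.
by apply: connect_trans hub_true; apply: connect1.
Qed.

Lemma theta_mid_cycle i j h : j != i ->
  connect (del_edge theta (mid i) (hub h)) (mid i) (hub h).
Proof.
move=> ji; apply: (@connect_del_edge_cycle _ _ _ _ [:: hub (~~ h); mid j]) => //=.
by rewrite !inE !sum_eqE (negbTE ji); case: h.
Qed.

Lemma theta_inner_hub_cycle p b (i : 'I_n) :
  connect (del_edge theta (inner p b) (hub b)) (inner p b) (hub b).
Proof.
apply: (@connect_del_edge_cycle _ _ _ _ [:: inner p (~~ b); hub (~~ b); mid i]);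
  rewrite //=; by rewrite ?inE ?sum_eqE ?xpair_eqE ?eqxx; case: b.
Qed.

Lemma theta_inner_inner_cycle p b (i : 'I_n) :
  connect (del_edge theta (inner p b) (inner p (~~ b))) (inner p b) (inner p (~~ b)).
Proof.
apply: (@connect_del_edge_cycle _ _ _ _ [:: hub b; mid i; hub (~~ b)]) => //=;
  by rewrite ?inE ?sum_eqE ?xpair_eqE ?eqxx; case: b.
Qed.

Lemma theta_two_edge_connected : (1 < n)%N -> two_edge_connected theta.
Proof.
move=> n2; have [_ sym] := theta_simple.
apply: two_edge_connected_cycles => //; first exact: theta_connected (ltnW n2).
have [i0 [i1 i10]] : exists i0 i1 : 'I_n, i1 != i0.
  by exists (Ordinal (ltnW n2)), (Ordinal n2).
have other (i : 'I_n) : {j | j != i}.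
  by case: (eqVneq i i0) => [->|]; [exists i1 | exists i0; rewrite eq_sym].
have flip u v : connect (del_edge theta v u) v u -> connect (del_edge theta u v) u v.
  by rewrite del_edgeC (sym_connect_sym (del_edge_sym u v sym)).
case=> [[h|i]|[p b]] [[h'|j]|[q c]] //= => [_|/eqP<-|_|/eqP->|/andP[/eqP<- bc]].
- by apply: flip; have [i' ji] := other j; exact: theta_mid_cycle ji.
- by apply: flip; exact: theta_inner_hub_cycle i0.
- by have [j' ji] := other i; exact: theta_mid_cycle ji.
- exact: theta_inner_hub_cycle i0.
- have -> : c = ~~ b by case: b c bc => [] [].
  exact: theta_inner_inner_cycle i0.
Qed.

Lemma theta_minimal u v : theta u v -> ~ two_edge_connected (del_edge theta u v).
Proof.
have [irr _] := theta_simple.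
have mid_deg2 i h : ~ two_edge_connected (del_edge theta (mid i) (hub h)).
  apply: (@del_edge_deg2_not_2ec _ _ _ _ (hub (~~ h))) => //; last by case: h.
  by move=> y; rewrite theta_mid; case: h; rewrite // orbC.
have inner_hub p b : ~ two_edge_connected (del_edge theta (inner p b) (hub b)).
  exact: del_edge_deg2_not_2ec irr (theta_inner p b) _.
have inner_inner p b :
    ~ two_edge_connected (del_edge theta (inner p b) (inner p (~~ b))).
  by apply: (@del_edge_deg2_not_2ec _ _ _ _ (hub b)) => // y; rewrite theta_inner orbC.
case: u v => [[h|i]|[p b]] [[h'|j]|[q c]] //= => [_|/eqP<-|/eqP->|/andP[/eqP<- bc]].
- by rewrite del_edgeC.
- by rewrite del_edgeC.
- by [].
- by have -> : c = ~~ b by case: b c bc => [] [].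
Qed.

Definition theta_edge_label : finType := ((bool * 'I_n) + ('I_r * option bool))%type.

Definition theta_edge (l : theta_edge_label) : {set theta_vertex} :=
  match l with
  | inl (h, i) => [set hub h; mid i]
  | inr (p, None) => [set inner p false; inner p true]
  | inr (p, Some b) => [set hub b; inner p b]
  end.

Lemma theta_edge_inj : injective theta_edge.
Proof.
by case=> [[h i]|[p [b|]]] [[h' i']|[q [c|]]] /= /set2_eq_inv; intuition congruence.
Qed.

Lemma theta_edges : edges theta = theta_edge @: setT.
Proof.
apply/setP=> s; apply/idP/imsetP.
  case/imset2P => x y _; rewrite inE => /andP[_ exy] ->.
  case: x y exy => [[h|i]|[p b]] [[h'|j]|[q c]] //= => [_|/eqP<-|_|/eqP->|].
  - by exists (inl (h, j)); rewrite ?in_setT.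
  - by exists (inr (q, Some h)); rewrite ?in_setT.
  - by exists (inl (h', i)); rewrite ?in_setT //= setUC.
  - by exists (inr (p, Some b)); rewrite ?in_setT //= setUC.
  - case/andP=> /eqP<- bc; exists (inr (p, None)); rewrite ?in_setT //=.
    by case: b c bc => [] [] //= _; rewrite setUC.
by case=> l _ ->; case: l => [[h i]|[p [b|]]]; apply: imset2_f; rewrite ?inE /= ?eqxx.
Qed.

Lemma theta_nedges : nedges theta = (2 * n + 3 * r)%N.
Proof.
rewrite /nedges theta_edges card_imset; last exact: theta_edge_inj.
by rewrite cardsT card_sum !card_prod card_option !card_ord card_bool (mulnC r).
Qed.

Definition theta_cubic (R : rcfType) : {poly R} :=
  'X^3 - 'X^2 - (2 * n + r)%:R%:P * 'X + (2 * n)%:R%:P.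

Definition theta_eigvec (R : rcfType) (l : R) (x : theta_vertex) : R :=
  match x with
  | inl (inl _) => l * (l - 1)
  | inl (inr _) => 2 * (l - 1)
  | inr _ => l
  end.

Lemma theta_eigvecP (R : rcfType) (l : R) : root (theta_cubic R) l ->
  forall y, \sum_x theta_eigvec l x * (theta x y)%:R = l * theta_eigvec l y.
Proof.
move=> /rootP; rewrite !hornerE => cubic_l y.
rewrite !big_sumType big_bool sum_pair_bool.
case: y => [[h|j]|[q c]] /=; rewrite ?mulr0n ?mulr1n !mulr0 ?mulr1 ?addr0.
- have inner_sum :
      \sum_(p < r) (l * (h == true)%:R + l * (h == false)%:R) = l *+ r.
    rewrite -[in RHS](card_ord r) -sumr_const; apply: eq_bigr => p _.
    by case: h; rewrite /= mulr0 mulr1 ?addr0 ?add0r.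
  rewrite inner_sum add0r sumr_const card_ord -[_ *+ n]mulr_natr -[l *+ r]mulr_natr.
  rewrite natrD natrM in cubic_l.
  lra.
- by rewrite !big1 // !addr0; lra.
- rewrite big1 // addr0 (bigD1 q) //= big1 => [|p /negbTE ->];
    last by rewrite mulr0 addr0.
  by case: c; rewrite /= ?eqxx /= ?mulr0 ?mulr1 ?addr0 ?add0r; lra.
Qed.

Lemma theta_root_le_spec_radius (R : rcfType) (l : R) :
  1 < l -> root (theta_cubic R) l -> l <= spec_radius R theta.
Proof.
move=> l_gt1 root_l.
apply/eigenvalue_le_spec_radius.
apply: (@eigvec_eigenvalue_adjmx _ _ _ (theta_eigvec l) _ (hub false)).
  by rewrite /= mulf_neq0 // ?subr_eq0 gt_eqF // (lt_trans ltr01).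
exact: theta_eigvecP.
Qed.

Lemma theta_cubic_root_gt_sqrt (R : rcfType) : (1 < n)%N -> (r <= 1)%N ->
  exists2 l, Num.sqrt ((2 * n + 3 * r - 2)%N%:R : R) < l & root (theta_cubic R) l.
Proof.
move=> n_gt1 r_le1.
set s := Num.sqrt _.
have s_ge0 : 0 <= s by apply: sqrtr_ge0.
have s_sq : s ^+ 2 = 2 * n%:R + 3 * r%:R - 2.
  by rewrite sqr_sqrtr ?ler0n // natrB ?natrD ?natrM //; [lra | lia].
clearbody s.
have n_ge2 : 2 <= (n%:R : R) by rewrite (ler_nat R 2 n).
have r01 : r%:R = 0 :> R \/ r%:R = 1 :> R by case: (r) r_le1 => [|[|]] //; [left|right].
have s_gt1 : 1 < s by rewrite expr2 in s_sq; case: r01 => r01; nra.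
pose b : R := 2 * n%:R + 3 * r%:R.
have pE x : (theta_cubic R).[x] = x ^+ 3 - x ^+ 2 - (2 * n%:R + r%:R) * x + 2 * n%:R.
  by rewrite !hornerE natrD natrM.
have p_s : (theta_cubic R).[s] < 0.
  rewrite pE exprS s_sq; rewrite expr2 in s_sq.
  by case: r01 => r01; rewrite r01 in s_sq *; nra.
have p_b : 0 < (theta_cubic R).[b].
  rewrite pE /b; case: r01 => ->; rewrite !exprS expr0; nra.
have s_le_b : s <= b by rewrite /b; rewrite expr2 in s_sq; case: r01 => r01; nra.
have [l] := poly_ivtoo s_le_b (etrans (pmulr_llt0 _ p_b) p_s).
by rewrite in_itv /= => /andP[s_lt_l _] root_l; exists l.
Qed.
End Theta.

Lemma two_three_decomposition m : (6 <= m)%N ->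
  exists n r, [/\ m = (2 * n + 3 * r)%N, (1 < n)%N & (r <= 1)%N].
Proof.
move=> m_ge6; exists (m./2 - odd m)%N, (odd m : nat).
by have := odd_double_half m; case: (odd m) => /=; rewrite -mul2n => ?; split; lia.
Qed.

Theorem lemma2p10 (R : rcfType) (m : nat) (T : finType) (e : rel T) :
  (6 <= m)%N ->
  simple_graph e -> nedges e = m -> min_two_edge_connected e ->
  (forall (T' : finType) (e' : rel T'),
      simple_graph e' -> nedges e' = m -> min_two_edge_connected e' ->
      spec_radius R e' <= spec_radius R e) ->
  Num.sqrt ((m - 2)%N%:R : R) < spec_radius R e.
Proof.
move=> m_ge6 _ _ _ rho_max.
have [n [r [m_eq n_gt1 r_le1]]] := two_three_decomposition m_ge6.
have [l sqrt_lt_l root_l] := theta_cubic_root_gt_sqrt R n_gt1 r_le1.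
have l_gt1 : 1 < l.
  apply: le_lt_trans sqrt_lt_l; rewrite -[X in X <= _]sqrtr1 ler_sqrt ?ler1n //; lia.
rewrite m_eq; apply: lt_le_trans sqrt_lt_l _.
apply: le_trans (rho_max _ (@theta n r) _ _ _).
- exact: theta_root_le_spec_radius.
- exact: theta_simple.
- by rewrite theta_nedges.
- split; [exact: theta_two_edge_connected | exact: theta_minimal].
Qed.
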